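(* Let $a\in[0,\infty)$ and let $\theta:[0,1]\to[0,\infty]$ and $\vartheta:[0,\infty]\to[0,1]$ be continuous and decreasing functions such that (i) $\vartheta(x)=1$ if and only if $x\in[0,a]$, and (ii) the function $O_{\theta,\vartheta}:[0,1]^2\to[0,1]$, $O_{\theta,\vartheta}(x,y)=\vartheta(\theta(x)+\theta(y))$, is an overlap function. Then $\theta(x)=\frac{a}{2}$ if and only if $x=1$.
   Context: ''Decreasing'' means non-increasing and ''increasing'' means non-decreasing. Arithmetic in $[0,\infty]$ uses $c+\infty=\infty$; continuity on $[0,\infty]$ refers to the usual topology of the extended half-line. An overlap function is a map $O:[0,1]^2\to[0,1]$ that is (O1) commutative, (O2) $O(x,y)=0$ iff $xy=0$, (O3) $O(x,y)=1$ iff $xy=1$, (O4) increasing in each variable, (O5) continuous. *)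

From HB Require Import structures.
From mathcomp Require Import all_boot all_order all_algebra.
From mathcomp Require Import all_classical all_reals all_analysis.
Set Implicit Arguments. Unset Strict Implicit. Unset Printing Implicit Defensive.
Import Order.TTheory GRing.Theory Num.Theory.
Import numFieldNormedType.Exports.
Local Open Scope classical_set_scope.
Local Open Scope ring_scope.

Definition unitI (R : realType) (x : R) : bool := (0 <= x) && (x <= 1).

(* Overlap function O : [0,1]^2 -> [0,1], represented as a map R -> R -> R
   whose behaviour outside [0,1]^2 is irrelevant. *)
Definition overlap (R : realType) (O : R -> R -> R) : Prop :=
  (forall x y, unitI x -> unitI y -> unitI (O x y)) /\
  (forall x y, unitI x -> unitI y -> O x y = O y x) /\
  (forall x y, unitI x -> unitI y -> (O x y = 0 <-> x * y = 0)) /\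
  (forall x y, unitI x -> unitI y -> (O x y = 1 <-> x * y = 1)) /\
  (forall x x' y, unitI x -> unitI x' -> unitI y -> x <= x' -> O x y <= O x' y) /\
  (forall x y y', unitI x -> unitI y -> unitI y' -> y <= y' -> O x y <= O x y') /\
  {within [set p : R * R | unitI p.1 /\ unitI p.2],
     continuous (fun p : R * R => O p.1 p.2)}.

From HB Require Import structures.
From mathcomp Require Import all_boot all_order all_algebra.
From mathcomp Require Import all_classical all_reals all_analysis.
From mathcomp Require Import lra.
Set Implicit Arguments. Unset Strict Implicit. Unset Printing Implicit Defensive.
Import Order.TTheory GRing.Theory Num.Theory.
Import numFieldNormedType.Exports.
Local Open Scope classical_set_scope.
Local Open Scope ring_scope.

(* By (O3) and (i), for x, y in [0,1] we have theta x + theta y <= a exactly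
   when x = y = 1.  Taking x = y = 1 gives 2 theta 1 <= a, so theta 1 is finite;
   for y < 1 we get theta y > a - theta 1, and letting y tend to 1 from the left
   the continuity of theta gives theta 1 >= a - theta 1.  Hence theta 1 = a/2,
   and theta x = a/2 forces theta x + theta 1 = a, i.e. x = 1. *)

Lemma within_continuous_cvg_at_left (R : numFieldType) (T : topologicalType)
    (A : set R) (f : R -> T) (p : R) :
  {within A, continuous f} -> A p -> (\forall x \near p^'-, A x) ->
  f x @[x --> p^'-] --> f p.
Proof.
move=> /subspace_continuousP fA Ap nearA.
apply: cvg_trans (cvg_fmap2 _) (fA p Ap) => U AU.
rewrite near_withinE in nearA; rewrite /within/= in AU.
by apply: filterS2 nearA AU => x pA AU' xp; exact/AU'/pA.
Qed.

Lemma unitI1 (R : realType) : unitI (1 : R).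
Proof. by rewrite /unitI ler01 lexx. Qed.

Lemma near_left1_unitI (R : realType) : \forall x \near (1 : R)^'-, unitI x.
Proof.
near=> x; apply/andP; split; last by near: x; exact: nbhs_left_le.
by apply/ltW; near: x; exact: nbhs_left_gt.
Unshelve. all: by end_near. Qed.

Section AdditiveGenerator.
Variables (R : realType) (a : R) (theta : R -> \bar R) (vtheta : \bar R -> R).
Hypothesis theta_ge0 : forall x, unitI x -> (0 <= theta x)%E.
Hypothesis theta_cont : {within [set x : R | unitI x], continuous theta}.
Hypothesis vtheta_eq1 :
  forall u : \bar R, (0 <= u)%E -> (vtheta u = 1 <-> (u <= a%:E)%E).
Hypothesis overlap_eq1 : forall x y, unitI x -> unitI y ->
  (vtheta (theta x + theta y)%E = 1 <-> x * y = 1).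

Lemma theta_sum_le_iff x y : unitI x -> unitI y ->
  (theta x + theta y <= a%:E)%E <-> x * y = 1.
Proof.
move=> ux uy; rewrite -(vtheta_eq1 (adde_ge0 (theta_ge0 ux) (theta_ge0 uy))).
exact: overlap_eq1.
Qed.

Lemma theta_sum1_gt y : unitI y -> y < 1 -> (a%:E < theta y + theta 1)%E.
Proof.
move=> uy y_lt1; rewrite ltNge; apply/negP.
move/(theta_sum_le_iff uy (unitI1 R)); rewrite mulr1 => y1.
by rewrite y1 ltxx in y_lt1.
Qed.

Lemma theta1_eq_half : theta 1 = (a / 2)%:E.
Proof.
have u1 := unitI1 R.
have := (theta_sum_le_iff u1 u1).2 (mulr1 1).
case E1 : (theta 1) (theta_ge0 u1) => [t| |] // _; rewrite -EFinD lee_fin => tta.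
have near_gt : \forall y \near 1^'-, ((a - t)%:E <= theta y)%E.
  near=> y; apply/ltW; rewrite EFinB lteBlDr// -E1.
  by apply: theta_sum1_gt; near: y; [exact: near_left1_unitI | exact: nbhs_left_lt].
have : ((a - t)%:E <= theta 1)%E.
  apply: cvge_to_ge near_gt.
  exact: within_continuous_cvg_at_left theta_cont u1 (near_left1_unitI R).
by rewrite E1 lee_fin => att; congr (_%:E); lra.
Unshelve. all: by end_near. Qed.

End AdditiveGenerator.

Theorem proposition3p1 (R : realType) (a : R) (theta : R -> \bar R)
  (vtheta : \bar R -> R) :
  0 <= a ->
  (* theta : [0,1] -> [0,oo] *)
  (forall x, unitI x -> (0 <= theta x)%E) ->
  {within [set x : R | unitI x], continuous theta} ->
  (forall x y, unitI x -> unitI y -> x <= y -> (theta y <= theta x)%E) ->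
  (* vtheta : [0,oo] -> [0,1] *)
  (forall u : \bar R, (0 <= u)%E -> unitI (vtheta u)) ->
  {within [set u : \bar R | (0 <= u)%E], continuous vtheta} ->
  (forall u v : \bar R, (0 <= u)%E -> (0 <= v)%E -> (u <= v)%E ->
     vtheta v <= vtheta u) ->
  (* (i) *)
  (forall u : \bar R, (0 <= u)%E -> (vtheta u = 1 <-> (u <= a%:E)%E)) ->
  (* (ii) *)
  overlap (fun x y => vtheta (theta x + theta y)%E) ->
  forall x, unitI x -> (theta x = (a / 2)%:E <-> x = 1).
Proof.
move=> _ theta_ge0 theta_cont _ _ _ _ vtheta_eq1 [_ [_ [_ [overlap_eq1 _]]]] x ux.
have theta1 := theta1_eq_half theta_ge0 theta_cont vtheta_eq1 overlap_eq1.
split=> [thetax|->//]; rewrite -[x]mulr1.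
apply/(theta_sum_le_iff theta_ge0 vtheta_eq1 overlap_eq1 ux (unitI1 R)).
by rewrite thetax theta1 -EFinD -splitr.
Qed.
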